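(* Let $\Pi_1,\Pi_2$ be fixed subspaces of $\mathbb{F}_q^n$ with $\dim\Pi_1=d_1$, $\dim\Pi_2=d_2$ and $\dim(\Pi_1\cap\Pi_2)=d_{12}$. Let $\hat\Pi_1$ be the span of $m_1$ vectors chosen independently and uniformly at random from $\Pi_1$, and $\hat\Pi_2$ the span of $m_2$ vectors chosen independently and uniformly at random from $\Pi_2$ (all $m_1+m_2$ draws mutually independent). Then, with probability $1-O(q^{-1})$, \[ \dim(\hat\Pi_1\cap\hat\Pi_2)=\min\Big[d_{12},\ \big(m_1+m_2-(d_1+d_2-d_{12})\big)^+,\ \big(m_1-(d_1-d_{12})\big)^+,\ \big(m_2-(d_2-d_{12})\big)^+\Big]. \]
   Context: $x^+=\max(x,0)$. $O(\cdot)$ refers to $q\to\infty$ with $n,d_1,d_2,d_{12},m_1,m_2$ fixed. *)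

From HB Require Import structures.
From mathcomp Require Import all_boot all_order all_algebra all_field.
Set Implicit Arguments. Unset Strict Implicit. Unset Printing Implicit Defensive.
Import Order.TTheory GRing.Theory Num.Theory.

(* Subspaces of F^n are represented as row spaces of n x n matrices
   (mxalgebra); dim = \rank.  A draw of m vectors from Pi is a matrix
   X : 'M_(m,n) whose rows all lie in Pi, i.e. (X <= Pi)%MS; its span is
   the row space of X.  Uniform independent draws = uniform measure on
   such pairs of matrices. *)

(* min[d12, (m1+m2-(d1+d2-d12))^+, (m1-(d1-d12))^+, (m2-(d2-d12))^+];
   nat truncated subtraction implements x^+ (note d12 <= d1, d2). *)
Definition expected_dim (d1 d2 d12 m1 m2 : nat) : nat :=
  minn d12 (minn (m1 + m2 - (d1 + d2 - d12))
                 (minn (m1 - (d1 - d12)) (m2 - (d2 - d12)))).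

Definition fail_prob (F : finFieldType) (n m1 m2 : nat) (P1 P2 : 'M[F]_n)
  (k : nat) : rat :=
  (#|[set X : 'M[F]_(m1, n) * 'M[F]_(m2, n) |
       [&& (X.1 <= P1)%MS, (X.2 <= P2)%MS & \rank (X.1 :&: X.2)%MS != k]]|%:R
   / (#|[set X : 'M[F]_(m1, n) | (X <= P1)%MS]|
      * #|[set Y : 'M[F]_(m2, n) | (Y <= P2)%MS]|)%:R)%R.

From HB Require Import structures.
From mathcomp Require Import all_boot all_order all_algebra all_field.
From mathcomp Require Import zify ring.
Set Implicit Arguments. Unset Strict Implicit. Unset Printing Implicit Defensive.
Import Order.TTheory GRing.Theory Num.Theory.

(* Call a draw X of k vectors of V "deficient over U" when
   rank (U + X) < min (rank U + k, rank (U + V)), i.e. when U + X falls short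
   of the largest rank it could possibly have.

   Probabilistic half: for any U and V, a uniform k-draw from V is deficient
   over U with probability at most k / q (card_deficient).  Adding the draws
   one row at a time, a new row can only make the draw deficient when it lies
   in the proper subspace V :&: (U + previous rows) of V, which holds with
   probability at most 1/q (card_cap_nonsub).

   Linear-algebra half: if X1 is deficient neither over 0 nor over P2, and X2
   is deficient neither over 0 nor over X1, then the ranks of X1, X2,
   P2 + X1 and X1 + X2 are all determined, and the dimension formula for
   X1 :&: X2 yields exactly expected_dim (rank_cap_generic).

   A union bound over these four events gives
   fail_prob <= 2 (m1 + m2) / q, which is the theorem with C = 2 (m1 + m2). *)

Lemma sum_indicator (T : finType) (A : {pred T}) : \sum_(x : T) (x \in A) = #|A|.
Proof. by rewrite -sum1_card [RHS]big_mkcond; apply: eq_bigr => x _; case: (x \in A). Qed.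

Lemma card_pairs (A B : finType) (Q : A -> B -> bool) :
  #|[set p : A * B | Q p.1 p.2]| = \sum_(a : A) #|[set b | Q a b]|.
Proof.
rewrite -sum1dep_card -(pair_big_dep predT Q (fun _ _ => 1)) /=.
by apply: eq_bigr => a _; rewrite sum1dep_card.
Qed.

Lemma card_dep_pairs_le (A B : finType) (S : {set A}) (T : A -> {set B}) (q c : nat) :
  (forall a, a \in S -> #|T a| * q <= c) ->
  #|[set p : A * B | (p.1 \in S) && (p.2 \in T p.1)]| * q <= #|S| * c.
Proof.
move=> fibre_le; rewrite (card_pairs (fun a b => (a \in S) && (b \in T a))) big_distrl.
rewrite -(sum_indicator S) big_distrl /=.
apply: leq_sum => a _; have [aS | naS] := boolP (a \in S).
  rewrite mul1n; apply: leq_trans (fibre_le a aS); apply: eq_leq.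
  by congr (_ * _); apply: eq_card => b; rewrite !inE.
rewrite mul0n leqn0 muln_eq0 cards_eq0; apply/orP; left.
by apply/eqP/setP => b; rewrite !inE.
Qed.

Lemma scaled_translates_eq (F : fieldType) m n (T : 'M[F]_(m, n))
    (z t t' : 'rV[F]_n) (c c' : F) :
  (t <= T)%MS -> (t' <= T)%MS -> (t + c *: z = t' + c' *: z)%R -> ~~ (z <= T)%MS ->
  c = c'.
Proof.
move=> tT t'T E zT; apply/eqP; apply: contraR zT; rewrite -subr_eq0 => cc'.
have -> : z = ((c - c')^-1 *: (t' - t))%R.
  apply: (scalerI cc'); rewrite scalerA mulfV // scale1r scalerBl.
  by apply/eqP; rewrite subr_eq addrAC -E (addrC t) addrK.
by rewrite scalemx_sub // addmx_sub // -scaleN1r scalemx_sub.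
Qed.

(* The arithmetic of the main formula: if r1 = rank X1, r2 = rank X2,
   a = rank (P2 + X1), rs = rank (X1 + X2) take their generic values, with
   s = rank (P1 + P2), then rc = rank (X1 :&: X2) equals expected_dim. *)
Lemma expected_dim_generic (d1 d2 d12 s m1 m2 r1 r2 a rs rc : nat) :
  r1 = minn m1 d1 -> r2 = minn m2 d2 -> a = minn (d2 + m1) s ->
  rs = minn (r1 + m2) a -> rs + rc = r1 + r2 ->
  d12 <= d1 -> d12 <= d2 -> s + d12 = d1 + d2 ->
  rc = expected_dim d1 d2 d12 m1 m2.
Proof.
move=> -> -> -> -> Erc le1 le2 es.
have {Erc}-> : rc = minn m1 d1 + minn m2 d2 - minn (minn m1 d1 + m2) (minn (d2 + m1) s).
  by rewrite -Erc addKn.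
have {es}-> : s = d1 + d2 - d12 by rewrite -es addnK.
set u := minn m1 d1; set D := d1 + d2 - d12.
have -> : minn (u + m2) (minn (d2 + m1) D) = minn (u + minn m2 d2) D.
  rewrite addn_minr /u [minn m1 d1 + d2]addn_minl -/u -!minnA.
  congr (minn _ _); rewrite addnC; congr (minn _ _).
  by apply/esym/minn_idPr; rewrite /D leq_subr.
rewrite (minnE (u + minn m2 d2) D) subKn ?leq_subr // /u addn_minl !addn_minr !subn_minl.
have -> : m1 + d2 - D = m1 - (d1 - d12) by rewrite /D -(addnBAC _ le1) subnDr.
have -> : d1 + m2 - D = m2 - (d2 - d12) by rewrite /D -(addnBA _ le2) subnDl.
have -> : d1 + d2 - D = d12 by rewrite /D subKn // (leq_trans le1 (leq_addr _ _)).
by rewrite /expected_dim -minnA (minnCA d12) (minnCA d12) (minnC d12).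
Qed.

Section RandomSubspaces.
Variables (F : finFieldType) (n : nat).

Lemma card_rows_split k (A : {set 'M[F]_(1 + k, n)}) :
  #|A| = \sum_(X' : 'M[F]_(k, n)) #|[set x : 'rV[F]_n | col_mx x X' \in A]|.
Proof.
rewrite -(card_pairs (fun X' x => col_mx x X' \in A)).
pose glue (p : 'M[F]_(k, n) * 'rV[F]_n) := col_mx p.2 p.1.
have glue_inj : injective glue.
  by move=> [X x] [Y y]; rewrite /glue /= => /eq_col_mx [-> ->].
rewrite -(card_imset _ glue_inj); apply: eq_card => X.
apply/idP/imsetP => [XA | [[X' x] + ->]]; last by rewrite inE.
by exists (dsubmx X, usubmx X); rewrite /glue ?inE /= vsubmxK.
Qed.

Definition draws p (V : 'M[F]_(p, n)) k := [set X : 'M[F]_(k, n) | (X <= V)%MS].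

Lemma card_draws_succ p (V : 'M[F]_(p, n)) k :
  #|draws V k.+1| = #|draws V 1| * #|draws V k|.
Proof.
rewrite card_rows_split -(sum_indicator (draws V k)) big_distrr /=; apply: eq_bigr => X' _.
rewrite [X' \in _]inE; have [X'V | nX'V] := boolP (X' <= V)%MS.
  by rewrite muln1; apply: eq_card => x; rewrite !inE (col_mx_sub x X' V) X'V andbT.
rewrite muln0; apply/eqP; rewrite cards_eq0; apply/eqP/setP => x.
by rewrite !inE (col_mx_sub x X' V) (negbTE nX'V) andbF.
Qed.

(* A proper subspace V :&: T of V has at most #|V| / q elements: the q
   translates of it along a vector z of V outside T are disjoint. *)
Lemma card_cap_nonsub p1 p2 (V : 'M[F]_(p1, n)) (T : 'M[F]_(p2, n)) :
  ~~ (V <= T)%MS ->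
  #|[set x : 'rV[F]_n | (x <= V)%MS && (x <= T)%MS]| * #|F| <= #|draws V 1|.
Proof.
case/row_subPn => i zT; set z := row i V in zT.
set A := [set x : 'rV[F]_n | (x <= V)%MS && (x <= T)%MS].
pose shift (p : F * 'rV[F]_n) := (p.2 + p.1 *: z)%R.
have shift_inj : {in setX [set: F] A &, injective shift}.
  move=> [c t] [c' t'] /setXP [_] + /setXP [_]; rewrite !inE /shift /=.
  move=> /andP [_ tT] /andP [_ t'T] E.
  have c_eq := scaled_translates_eq tT t'T E zT.
  by move: E; rewrite c_eq => /addIr ->.
rewrite mulnC -cardsT -cardsX -(card_in_imset shift_inj).
apply: subset_leq_card; apply/subsetP => _ /imsetP [[c t] /setXP [_ +] ->].
rewrite !inE => /andP [tV _].
by rewrite addmx_sub // scalemx_sub // row_sub.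
Qed.

Definition deficient p p2 (U : 'M[F]_(p, n)) (V : 'M[F]_(p2, n)) k :=
  [set X : 'M[F]_(k, n) | (X <= V)%MS &&
     (\rank (U + X)%MS < minn (\rank U + k) (\rank (U + V)%MS))].

Section Deficient.
Variables (p p2 : nat) (U : 'M[F]_(p, n)) (V : 'M[F]_(p2, n)).

Lemma rank_adds_draw_le k (X : 'M[F]_(k, n)) :
  (X <= V)%MS -> \rank (U + X)%MS <= minn (\rank U + k) (\rank (U + V)%MS).
Proof.
move=> XV; rewrite leq_min mxrankS ?addsmxS // andbT.
by apply: leq_trans (mxrank_adds_leqif U X).1 _; rewrite leq_add2l rank_leq_row.
Qed.

Lemma rank_adds_generic k (X : 'M[F]_(k, n)) :
  (X <= V)%MS -> X \notin deficient U V k ->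
  \rank (U + X)%MS = minn (\rank U + k) (\rank (U + V)%MS).
Proof.
move=> XV; rewrite inE XV /= -leqNgt => ge_min.
by apply/eqP; rewrite eqn_leq ge_min rank_adds_draw_le.
Qed.

Lemma deficient0 : deficient U V 0 = set0.
Proof.
apply/setP => X; rewrite !inE; apply/negbTE.
by rewrite negb_and -leqNgt geq_min addn0 mxrankS ?addsmxSl ?orbT.
Qed.

Lemma deficient_extend k (X' : 'M[F]_(k, n)) (x : 'rV[F]_n) :
  X' \notin deficient U V k -> col_mx x X' \in deficient U V k.+1 ->
  [/\ (x <= V)%MS, (x <= U + X')%MS & ~~ (V <= U + X')%MS].
Proof.
move=> nDX'; rewrite inE => /andP [XV rank_lt].
move: (XV); rewrite (col_mx_sub x X' V) => /andP [xV X'V].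
have rankX' := rank_adds_generic X'V nDX'.
have /andP [xX X'X] : (x <= col_mx x X')%MS && (X' <= col_mx x X')%MS.
  by rewrite -col_mx_sub submx_refl.
have UX'_sub : (U + X' <= U + col_mx x X')%MS by rewrite addsmxS.
have x_sub : (x <= U + col_mx x X')%MS by rewrite (submx_trans xX) ?addsmxSr.
split=> //.
  apply: contraLR rank_lt => nxUX'; rewrite -leqNgt.
  have : (U + X' < U + col_mx x X')%MS.
    by rewrite ltmxE UX'_sub /=; apply: contra nxUX'; apply: submx_trans.
  rewrite ltmxErank => /andP [_]; rewrite rankX'.
  set r := \rank (U + col_mx x X')%MS.
  lia.
apply: contraL rank_lt => VUX'; rewrite -leqNgt geq_min; apply/orP; right.
apply: leq_trans (mxrankS UX'_sub).
by rewrite mxrankS // addsmx_sub addsmxSl.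
Qed.

(* Counting the rows x that make the extension of X' deficient: all rows of
   V if X' already is, at most #|V| / q of them if X' is a non-deficient
   draw, and none otherwise. *)
Lemma card_deficient_fibre k (X' : 'M[F]_(k, n)) :
  #|[set x : 'rV[F]_n | col_mx x X' \in deficient U V k.+1]| * #|F|
    <= #|F| * #|draws V 1| * (X' \in deficient U V k)
       + #|draws V 1| * (X' \in draws V k).
Proof.
set fibre := [set x | _].
have [DX' | nDX'] := boolP (X' \in deficient U V k).
  rewrite muln1 (mulnC #|F|); apply: leq_trans (leq_addr _ _).
  rewrite leq_mul2r; apply/orP; right; apply: subset_leq_card.
  by apply/subsetP => x; rewrite !inE (col_mx_sub x X' V) => /andP [/andP [-> _] _].
have [-> | [x0 fx0]] := set_0Vmem fibre; first by rewrite cards0.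
rewrite [x0 \in fibre]inE in fx0; have [_ _ nVUX'] := deficient_extend nDX' fx0.
move: fx0; rewrite inE (col_mx_sub x0 X' V) => /andP [/andP [_ X'V] _].
rewrite muln0 add0n [X' \in draws V k]inE X'V muln1.
apply: leq_trans (card_cap_nonsub nVUX'); rewrite leq_mul2r; apply/orP; right.
apply: subset_leq_card; apply/subsetP => x; rewrite [x \in fibre]inE => fx.
by have [xV xUX' _] := deficient_extend nDX' fx; rewrite inE xV xUX'.
Qed.

Lemma card_deficient k : #|deficient U V k| * #|F| <= k * #|draws V k|.
Proof.
elim: k => [|k IHk]; first by rewrite deficient0 cards0.
rewrite card_rows_split big_distrl /=.
apply: leq_trans; first by apply: leq_sum => X' _; apply: card_deficient_fibre.
rewrite big_split /= -!big_distrr /= !sum_indicator (card_draws_succ V k).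
rewrite mulSn addnC leq_add2l -mulnA mulnCA [leqRHS]mulnCA leq_mul2l.
by rewrite mulnC IHk orbT.
Qed.
End Deficient.

Lemma rank_cap_generic (P1 P2 : 'M[F]_n) m1 m2 (X1 : 'M[F]_(m1, n)) (X2 : 'M[F]_(m2, n)) :
  (X1 <= P1)%MS -> (X2 <= P2)%MS ->
  X1 \notin deficient (0 : 'M[F]_n)%R P1 m1 -> X1 \notin deficient P2 P1 m1 ->
  X2 \notin deficient (0 : 'M[F]_n)%R P2 m2 -> X2 \notin deficient X1 P2 m2 ->
  \rank (X1 :&: X2)%MS
    = expected_dim (\rank P1) (\rank P2) (\rank (P1 :&: P2)%MS) m1 m2.
Proof.
move=> X1P1 X2P2 gen1 gen2 gen3 gen4.
have := rank_adds_generic X1P1 gen1; have := rank_adds_generic X2P2 gen3.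
rewrite !adds0mx mxrank0 !add0n => rankX2 rankX1.
have rankP2X1 := rank_adds_generic X1P1 gen2; rewrite (addsmxC P2 P1) in rankP2X1.
have rankX1X2 := rank_adds_generic X2P2 gen4; rewrite (addsmxC X1 P2) in rankX1X2.
have capP1 : \rank (P1 :&: P2)%MS <= \rank P1 by rewrite mxrankS ?capmxSl.
have capP2 : \rank (P1 :&: P2)%MS <= \rank P2 by rewrite mxrankS ?capmxSr.
exact: expected_dim_generic rankX1 rankX2 rankP2X1 rankX1X2 (mxrank_sum_cap X1 X2)
         capP1 capP2 (mxrank_sum_cap P1 P2).
Qed.

Lemma card_fail_le (P1 P2 : 'M[F]_n) m1 m2 :
  #|[set X : 'M[F]_(m1, n) * 'M[F]_(m2, n) |
     [&& (X.1 <= P1)%MS, (X.2 <= P2)%MS & \rank (X.1 :&: X.2)%MS !=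
         expected_dim (\rank P1) (\rank P2) (\rank (P1 :&: P2)%MS) m1 m2]]| * #|F|
  <= 2 * (m1 + m2) * (#|draws P1 m1| * #|draws P2 m2|).
Proof.
set Bad := [set X | _]; set S1 := draws P1 m1; set S2 := draws P2 m2.
set E1 := deficient (0 : 'M[F]_n)%R P1 m1; set E2 := deficient P2 P1 m1.
set E3 := deficient (0 : 'M[F]_n)%R P2 m2.
set E4 := [set X : 'M[F]_(m1, n) * 'M[F]_(m2, n) |
            (X.1 \in S1) && (X.2 \in deficient X.1 P2 m2)].
have Bad_sub : Bad \subset setX E1 S2 :|: setX E2 S2 :|: setX S1 E3 :|: E4.
  apply/subsetP => -[X1 X2]; rewrite inE /= => /and3P [X1P1 X2P2]; apply: contraR.
  have X1S1 : X1 \in S1 by rewrite inE.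
  have X2S2 : X2 \in S2 by rewrite inE.
  rewrite !in_setU !in_setX [_ \in E4]inE X1S1 X2S2 /= !andbT !negb_or.
  case/andP=> /andP [/andP [gen1 gen2] gen3] gen4.
  by rewrite (rank_cap_generic X1P1 X2P2 gen1 gen2 gen3 gen4) eqxx.
have union_le : #|Bad| <= #|E1| * #|S2| + #|E2| * #|S2| + #|S1| * #|E3| + #|E4|.
  apply: leq_trans (subset_leq_card Bad_sub) _; rewrite -!cardsX.
  apply: leq_trans (leq_card_setU _ _).1 _; rewrite leq_add2r.
  apply: leq_trans (leq_card_setU _ _).1 _; rewrite leq_add2r.
  exact: (leq_card_setU _ _).1.
have b1 : #|E1| * #|F| <= m1 * #|S1| := card_deficient _ _ _.
have b2 : #|E2| * #|F| <= m1 * #|S1| := card_deficient _ _ _.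
have b3 : #|E3| * #|F| <= m2 * #|S2| := card_deficient _ _ _.
have b4 : #|E4| * #|F| <= #|S1| * (m2 * #|S2|).
  exact: card_dep_pairs_le (fun X1 _ => card_deficient X1 P2 m2).
apply: leq_trans (leq_mul union_le (leqnn #|F|)) _.
have -> : 2 * (m1 + m2) * (#|S1| * #|S2|)
    = m1 * #|S1| * #|S2| + m1 * #|S1| * #|S2| + #|S1| * (m2 * #|S2|)
      + #|S1| * (m2 * #|S2|) by ring.
rewrite !mulnDl; repeat apply: leq_add.
- by rewrite mulnAC leq_mul2r b1 orbT.
- by rewrite mulnAC leq_mul2r b2 orbT.
- by rewrite -mulnA leq_mul2l b3 orbT.
- exact: b4.
Qed.

Lemma fail_prob_le (P1 P2 : 'M[F]_n) m1 m2 :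
  (fail_prob m1 m2 P1 P2
     (expected_dim (\rank P1) (\rank P2) (\rank (P1 :&: P2)%MS) m1 m2)
   <= (2 * (m1 + m2))%:R / #|F|%:R)%R.
Proof.
have q_gt0 : 0 < #|F| by apply/card_gt0P; exists 0%R.
have draws_gt0 p (V : 'M[F]_(p, n)) k : 0 < #|draws V k|.
  by apply/card_gt0P; exists 0%R; rewrite inE sub0mx.
rewrite /fail_prob ler_pdivrMr ?ltr0n ?muln_gt0 ?draws_gt0 //.
rewrite mulrAC ler_pdivlMr ?ltr0n // -!natrM ler_nat.
exact: card_fail_le.
Qed.
End RandomSubspaces.

Theorem corollary2 (n d1 d2 d12 m1 m2 : nat) :
  exists (C : rat) (q0 : nat),
    forall (F : finFieldType) (P1 P2 : 'M[F]_n),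
      \rank P1 = d1 -> \rank P2 = d2 -> \rank (P1 :&: P2)%MS = d12 ->
      (q0 <= #|F|)%N ->
      (fail_prob m1 m2 P1 P2 (expected_dim d1 d2 d12 m1 m2)
         <= C / (#|F|%:R))%R.
Proof.
exists (2 * (m1 + m2))%:R%R, 0 => F P1 P2 <- <- <- _.
exact: fail_prob_le.
Qed.
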